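(* Let $k$ be odd, $n=4k$, $d=\frac{(3^{2k}+1)^2}{20}$, $\alpha$ a primitive element of $\mathrm{GF}(3^n)$, $s_t=\mathrm{Tr}_1^n(\alpha^t)$, and for $0\le\tau\le 3^n-2$ let $C_d(\tau)=\sum_{t=0}^{3^n-2}\omega^{s_{t+\tau}-s_{dt}}$. Put $a=\alpha^\tau$ and let $r$ be a nonsquare in $\mathrm{GF}(3^4)$ (viewed inside $\mathrm{GF}(3^n)$). Then $$C_d(\tau)=-1+S_d(\tau),\qquad S_d(\tau)=\sum_{x\in\mathrm{GF}(3^n)}\omega^{\mathrm{Tr}_1^n(ax-x^d)},$$ and $$2S_d(\tau)=\sum_{x\in\mathrm{GF}(3^n)}\omega^{q_1(x)}+\sum_{x\in\mathrm{GF}(3^n)}\omega^{q_2(x)},$$ where $$q_1(x)=\mathrm{Tr}_1^n\big(a x^{3^{2(k+1)}+1}-x^{3^{2k}+1}\big),\qquad q_2(x)=\mathrm{Tr}_1^n\big(a r x^{3^{2(k+1)}+1}-r^{d}x^{3^{2k}+1}\big).$$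
   Context: $\omega=e^{2\pi\sqrt{-1}/3}$. $\mathrm{Tr}_1^n(x)=x+x^3+\cdots+x^{3^{n-1}}$ is the absolute trace from $\mathrm{GF}(3^n)$ to $\mathrm{GF}(3)$, and values in $\mathrm{GF}(3)=\mathbb{Z}/3\mathbb{Z}$ are used as exponents of $\omega$. *)

From HB Require Import structures.
From mathcomp Require Import all_boot all_order all_algebra all_field.
Set Implicit Arguments. Unset Strict Implicit. Unset Printing Implicit Defensive.
Import Order.TTheory GRing.Theory Num.Theory.
Local Open Scope ring_scope.

Definition omega : algC := (-1 + 'i * sqrtC 3%:R) / 2%:R.

Definition tr (F : finFieldType) (n : nat) (x : F) : F :=
  \sum_(i < n) x ^+ (3 ^ i)%N.

(* GF(3) = Z/3Z value of an element of the prime field, as an exponent in {0,1,2} *)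
Definition gf3 (F : finFieldType) (y : F) : nat :=
  if y == 0 then 0%N else if y == 1 then 1%N else 2%N.

Definition omtr (F : finFieldType) (n : nat) (x : F) : algC :=
  omega ^+ gf3 (tr n x).

From HB Require Import structures.
From mathcomp Require Import all_boot all_order all_algebra all_field.
From mathcomp Require Import ring zify.
Import Order.TTheory GRing.Theory Num.Theory.
Local Open Scope ring_scope.
Set Implicit Arguments. Unset Strict Implicit. Unset Printing Implicit Defensive.

(* Write q = 3^(2k), N = 3^n - 1 = q^2 - 1 and psi(x) = omega^(Tr(x)).

   1. In characteristic 3 the trace is additive with values in GF(3), and the
      exponent map GF(3) -> <omega> turns addition into multiplication, so psi
      is an additive character: psi(x - y) = psi(x) / psi(y).
   2. Hence the t-th term of C_d(tau) is G(alpha^t) with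
      G(x) = psi(a x - x^d); as t runs over [0, N) the powers alpha^t run over
      the nonzero elements, so C_d(tau) = S_d(tau) - G(0) = S_d(tau) - 1.
   3. For a nonsquare r, every x has exactly two preimages under y |-> y^2 or
      y |-> r y^2 altogether, so 2 S_d = sum_y G(y^2) + sum_y G(r y^2).
   4. Since k is odd, q = 20c + 9; then e = (9q + 1)/2 is prime to N, so
      z |-> z^e permutes the field, and z^(2e) = z^(3^(2(k+1)) + 1),
      z^(2ed) = z^(q + 1); substituting y = z^e gives the quadratic forms q1,
      q2.  Finally r, a nonsquare of GF(3^4), stays a nonsquare in the odd
      degree extension GF(3^(4k)).
   The file proves these facts in this order, each at its natural generality,
   and assembles them in the main theorem. *)

Lemma omega_cube : omega ^+ 3 = 1.
Proof.
have omega_root : omega ^+ 2 + omega + 1 = 0.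
  rewrite /omega; set i := 'i; set s := sqrtC 3%:R.
  have e : 3%:R + i ^+ 2 * s ^+ 2 = 0 by rewrite sqrCi sqrtCK mulN1r subrr.
  have -> : ((-1 + i * s) / 2%:R) ^+ 2 + (-1 + i * s) / 2%:R + 1
          = (3%:R + i ^+ 2 * s ^+ 2) / 4%:R by field.
  by rewrite e mul0r.
apply/eqP; rewrite -subr_eq0.
have -> : omega ^+ 3 - 1 = (omega - 1) * (omega ^+ 2 + omega + 1) by ring.
by rewrite omega_root mulr0.
Qed.

Lemma omega_neq0 : omega != 0.
Proof.
by apply/eqP => h; move: omega_cube; rewrite h expr0n /= => /eqP; rewrite eq_sym oner_eq0.
Qed.

Lemma omega_expr_mod3 m : omega ^+ (m %% 3) = omega ^+ m.
Proof. by rewrite {2}(divn_eq m 3) exprD mulnC exprM omega_cube expr1n mul1r. Qed.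

Lemma sum_fibres (T : finType) (V : zmodType) (f : T -> T) (G : T -> V) :
  \sum_y G (f y) = \sum_x G x *+ #|[pred y | f y == x]|.
Proof.
rewrite (partition_big f predT) //=; apply: eq_bigr => x _.
by rewrite (eq_bigr (fun _ => G x)) ?sumr_const // => y /eqP ->.
Qed.

Section CharacteristicThree.
Variable F : finFieldType.
Hypothesis char3 : 3 \in [pchar F].

Lemma two_neq0 : (2 : F) != 0.
Proof.
apply/eqP => h2; move: (pcharf0 char3).
by rewrite -(@natr1 F 2) h2 add0r => /eqP; rewrite oner_eq0.
Qed.

Lemma frobenius_add i (x y : F) : (x + y) ^+ (3 ^ i) = x ^+ (3 ^ i) + y ^+ (3 ^ i).
Proof. by apply: exprDn_pchar; rewrite (eq_pnat _ (pcharf_eq char3)) pnatX pnat_id. Qed.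

Lemma tr_add n (x y : F) : tr n (x + y) = tr n x + tr n y.
Proof. by rewrite /tr -big_split; apply: eq_bigr => i _; rewrite frobenius_add. Qed.

Lemma tr0 n : tr n (0 : F) = 0.
Proof. by rewrite /tr big1 // => i _; rewrite expr0n expn_eq0. Qed.

(* If x lies in GF(3^n), cubing permutes the terms of its trace cyclically,
   so the trace lies in GF(3). *)
Lemma tr_cube n (x : F) : (0 < n)%N -> x ^+ (3 ^ n) = x -> tr n x ^+ 3 = tr n x.
Proof.
case: n => // n _ hx; rewrite /tr.
rewrite (big_morph (fun z : F => z ^+ (3 ^ 1)) (frobenius_add 1) (expr0n _ _)).
rewrite big_ord_recr big_ord_recl /= -exprM -expnSr hx expn0 expr1 addrC.
by congr (_ + _); apply: eq_bigr => i _; rewrite -exprM -expnSr.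
Qed.

Lemma gf3_natr m : gf3 (m%:R : F) = (m %% 3)%N.
Proof.
rewrite -(GRing.natr_mod_pchar char3) /gf3.
have : (m %% 3 < 3)%N by rewrite ltn_mod.
case: (m %% 3)%N => [|[|[|//]]] _ /=; rewrite ?eqxx ?oner_eq0 //.
rewrite (negbTE two_neq0); case: eqP => // h21.
by move/eqP: h21; rewrite -(@natr1 F 1) -subr_eq0 addrK oner_eq0.
Qed.

Lemma prime_field_natr (u : F) : u ^+ 3 = u -> u = (gf3 u)%:R.
Proof.
move=> hu; have : u * (u - 1) * (u + 1) == 0.
  by rewrite (_ : _ * _ = u ^+ 3 - u); [rewrite hu subrr | ring].
rewrite !mulf_eq0 subr_eq0 addr_eq0 => /orP[/orP[]|] /eqP ->.
- by rewrite /gf3 eqxx.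
- by rewrite /gf3 oner_eq0 eqxx.
have m1_two : (-1 : F) = 2.
  by apply/eqP; rewrite eq_sym -subr_eq0 opprK natr1 (pcharf0 char3).
by rewrite m1_two gf3_natr.
Qed.

Lemma omega_gf3D (u v : F) : u ^+ 3 = u -> v ^+ 3 = v ->
  omega ^+ gf3 (u + v) = omega ^+ gf3 u * omega ^+ gf3 v.
Proof.
move=> /prime_field_natr -> /prime_field_natr ->.
by rewrite -natrD !gf3_natr !omega_expr_mod3 exprD.
Qed.

Section AdditiveCharacter.
Variable n : nat.
Hypothesis n_gt0 : (0 < n)%N.
Hypothesis frobF : forall x : F, x ^+ (3 ^ n) = x.

Lemma omtrD (x y : F) : omtr n (x + y) = omtr n x * omtr n y.
Proof. by rewrite /omtr tr_add omega_gf3D // tr_cube. Qed.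

Lemma omtr0 : omtr n (0 : F) = 1.
Proof. by rewrite /omtr tr0 /gf3 eqxx expr0. Qed.

Lemma omtrB (x y : F) : omtr n (x - y) = omtr n x / omtr n y.
Proof.
have omtr_neq0 z : omtr n z != 0 by rewrite expf_neq0 // omega_neq0.
by rewrite -[X in _ = omtr n X / _](subrK y x) [in RHS]omtrD mulfK.
Qed.

End AdditiveCharacter.
End CharacteristicThree.

Section FiniteFieldPowers.
Variables (F : finFieldType) (N : nat).
Hypothesis cardF : #|F| = N.+1.

Lemma expr_unit_order (z : F) : z != 0 -> z ^+ N = 1.
Proof. by move=> z0; apply: (mulIf z0); rewrite mul1r -exprSr -cardF expf_card. Qed.

Lemma expr_mod_order (z : F) a b : (0 < a)%N -> z ^+ (a + N * b) = z ^+ a.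
Proof.
move=> a_gt0; have [->|z0] := eqVneq z 0.
  by rewrite !expr0n !eqn0Ngt a_gt0 addn_gt0 a_gt0.
by rewrite exprD exprM expr_unit_order // expr1n mulr1.
Qed.

(* An exponent prime to N permutes F: a Bezout inverse undoes it. *)
Lemma expr_coprime_inj e : (0 < e)%N -> coprime e N -> injective (fun z : F => z ^+ e).
Proof.
move=> e_gt0 /eqP coprime_eN; have [u v bezout _] := egcdnP N e_gt0.
have inverse (z : F) : (z ^+ e) ^+ u = z.
  by rewrite -exprM mulnC bezout coprime_eN addnC mulnC expr_mod_order // expr1.
by move=> x y /= hxy; rewrite -(inverse x) -(inverse y) hxy.
Qed.

End FiniteFieldPowers.

Section QuadraticCharacter.
Variables (F : finFieldType) (M : nat) (alpha : F).
Hypothesis cardF : #|F| = (M * 2).+1.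
Hypothesis alpha_prim : (M * 2).-primitive_root alpha.

Lemma alpha_neq0 : alpha != 0.
Proof.
apply/eqP => a0; move: (prim_expr_order alpha_prim) (prim_order_gt0 alpha_prim).
by rewrite a0 expr0n lt0n; case: eqP => //= _ /esym/eqP; rewrite oner_eq0.
Qed.

Lemma powers_alpha : [set alpha ^+ i | i : 'I_(M * 2)] = [set~ 0].
Proof.
apply/setP/subset_cardP.
  rewrite card_imset ?card_ord ?cardsC1 ?cardF // => i j /eqP.
  by rewrite (eq_prim_root_expr alpha_prim) !modn_small // => /eqP/val_inj.
by apply/subsetP => _ /imsetP[i _ ->]; rewrite in_setC1 expf_neq0 // alpha_neq0.
Qed.

Lemma sum_powers_alpha (V : zmodType) (G : F -> V) :
  \sum_(t < M * 2) G (alpha ^+ t) = \sum_x G x - G 0.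
Proof.
rewrite [in RHS](bigD1 0) //= addrAC subrr add0r.
rewrite (eq_bigl (mem [set~ 0])) => [|x]; last by rewrite !inE.
rewrite -powers_alpha big_imset //= => i j _ _ /eqP.
by rewrite (eq_prim_root_expr alpha_prim) !modn_small // => /eqP/val_inj.
Qed.

Lemma alpha_half_neq1 : alpha ^+ M != 1.
Proof.
rewrite -(prim_order_dvd alpha_prim); apply/negP => /dvdn_leq.
by move: (prim_order_gt0 alpha_prim); rewrite muln_gt0 => /andP[M_gt0 _] /(_ M_gt0); lia.
Qed.

(* alpha^M is a square root of 1 other than 1. *)
Lemma alpha_half : alpha ^+ M = -1.
Proof.
have : (alpha ^+ M - 1) * (alpha ^+ M + 1) == 0.
  have -> : (alpha ^+ M - 1) * (alpha ^+ M + 1) = alpha ^+ (M * 2) - 1.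
    by rewrite exprM; ring.
  by rewrite prim_expr_order // subrr.
by rewrite mulf_eq0 subr_eq0 (negbTE alpha_half_neq1) addr_eq0 => /eqP.
Qed.

Lemma opp1_neq1 : (-1 : F) != 1.
Proof. by rewrite -alpha_half alpha_half_neq1. Qed.

Lemma square_half (w : F) : w != 0 -> (w ^+ 2) ^+ M = 1.
Proof. by move=> w0; rewrite -exprM mulnC (expr_unit_order cardF). Qed.

Lemma square_or_half (z : F) :
  z != 0 -> (exists2 w, w != 0 & z = w ^+ 2) \/ z ^+ M = -1.
Proof.
rewrite -in_setC1 -powers_alpha => /imsetP[[i _] _ ->] /=.
rewrite -(odd_double_half i); case: (odd i) => /=; last first.
  by left; exists (alpha ^+ i./2); rewrite ?expf_neq0 ?alpha_neq0 // -exprM muln2.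
right; rewrite -exprM (_ : ((1 + i./2.*2) * M = M + M * 2 * i./2)%N); last first.
  by rewrite -muln2; lia.
by rewrite exprD exprM (prim_expr_order alpha_prim) expr1n mulr1 alpha_half.
Qed.

Lemma card_sqrt0 : #|[pred y : F | y ^+ 2 == 0]| = 1%N.
Proof. by rewrite (eq_card (B := pred1 0)) ?card1 // => y; rewrite !inE sqrf_eq0. Qed.

Lemma card_sqrt_square (w : F) : w != 0 -> #|[pred y : F | y ^+ 2 == w ^+ 2]| = 2%N.
Proof.
move=> w0; rewrite (eq_card (B := pred2 w (- w))) => [|y]; last by rewrite !inE eqf_sqr.
have w_neq : w != - w.
  apply: contraNneq opp1_neq1 => hw; apply/eqP/(mulIf w0).
  by rewrite mulN1r mul1r -hw.
by rewrite card2 w_neq.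
Qed.

Lemma card_sqrt_nonsquare (x : F) :
  ~ (exists w, x = w ^+ 2) -> #|[pred y : F | y ^+ 2 == x]| = 0%N.
Proof. by move=> nsq; apply: eq_card0 => y; rewrite !inE; apply/eqP => hy; apply: nsq; exists y. Qed.

Variable r : F.
Hypothesis r_nonsquare : ~ exists y, r = y ^+ 2.

Lemma r_neq0 : r != 0.
Proof. by apply/eqP => r0; apply: r_nonsquare; exists 0; rewrite r0 expr0n. Qed.

Lemma card_twisted_sqrt (x : F) :
  #|[pred y : F | r * y ^+ 2 == x]| = #|[pred y : F | y ^+ 2 == x / r]|.
Proof.
apply: eq_card => y; rewrite !inE; apply/eqP/eqP => [<-|->].
  by rewrite mulrC mulKf ?r_neq0.
by rewrite mulrC divfK ?r_neq0.
Qed.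

(* Every x has exactly two preimages under y |-> y^2 and y |-> r y^2 together:
   exactly one of x, x / r is a square when x != 0. *)
Lemma square_fibres (x : F) :
  addn #|[pred y : F | y ^+ 2 == x]| #|[pred y : F | r * y ^+ 2 == x]| = 2%N.
Proof.
rewrite card_twisted_sqrt.
have [->|x0] := eqVneq x 0; first by rewrite mul0r card_sqrt0.
have xr0 : x / r != 0 by rewrite mulf_neq0 ?invr_eq0 ?r_neq0.
have [r_sq|r_half] := square_or_half r_neq0.
  by case: r_sq => w _ rw; case: r_nonsquare; exists w.
have [[w w0 xw]|x_half] := square_or_half x0.
  have xr_nonsquare : ~ exists v, x / r = v ^+ 2.
    move=> [v hv]; apply: r_nonsquare.
    have v0 : v != 0 by apply: contraNneq xr0 => v0; rewrite hv v0 expr0n.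
    by exists (w / v); rewrite expr_div_n -xw -hv; field; rewrite x0 r_neq0.
  by rewrite (card_sqrt_nonsquare xr_nonsquare) xw (card_sqrt_square w0).
have [[v v0 hv]|xr_half] := square_or_half xr0.
  have x_nonsquare : ~ exists w, x = w ^+ 2.
    move=> [w hw]; have w0 : w != 0 by apply: contraNneq x0 => w0; rewrite hw w0 expr0n.
    by move: x_half; rewrite hw square_half // => /eqP; rewrite eq_sym (negbTE opp1_neq1).
  by rewrite (card_sqrt_nonsquare x_nonsquare) hv (card_sqrt_square v0).
move: xr_half; rewrite exprMn x_half exprVn r_half invrN1 mulN1r opprK => /eqP.
by rewrite eq_sym (negbTE opp1_neq1).
Qed.

Lemma sum_square_twist (V : zmodType) (G : F -> V) :
  \sum_y G (y ^+ 2) + \sum_y G (r * y ^+ 2) = (\sum_x G x) *+ 2.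
Proof.
rewrite (sum_fibres (fun y : F => y ^+ 2)) (sum_fibres (fun y : F => r * y ^+ 2)).
rewrite -big_split -sumrMnl; apply: eq_bigr => x _ /=.
by rewrite -mulrnDr square_fibres.
Qed.

End QuadraticCharacter.

(* A nonsquare of the subfield of order q stays a nonsquare in an odd degree
   extension: a square root y outside the subfield satisfies y^q = -y, hence
   y = y^(q^k) = -y, and then y^q = y after all. *)
Lemma nonsquare_odd_extension (F : fieldType) (q k : nat) (r : F) :
  odd q -> odd k -> (forall x : F, x ^+ (q ^ k) = x) ->
  r ^+ q = r -> ~ (exists y : F, y ^+ q = y /\ y ^+ 2 = r) ->
  ~ exists y, r = y ^+ 2.
Proof.
move=> odd_q odd_k frobF fixed_r nsq [y ry].
have : (y ^+ q) ^+ 2 == y ^+ 2 by rewrite -exprM mulnC exprM -ry fixed_r.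
rewrite eqf_sqr => /orP[/eqP yq|/eqP yq]; first by apply: nsq; exists y.
have sign_q : (-1 : F) ^+ q = -1 by rewrite -signr_odd odd_q.
have iterate j : y ^+ (q ^ j) = (-1) ^+ j * y.
  elim: j => [|j IH]; first by rewrite expn0 expr1 mul1r.
  rewrite expnSr exprM IH exprMn yq -exprM mulnC exprM sign_q.
  by rewrite exprS; ring.
have y_neg : y = - y by rewrite -{1}(frobF y) iterate -signr_odd odd_k expr1 mulN1r.
by apply: nsq; exists y; rewrite yq -y_neg ry.
Qed.

(* For odd k, 3^(2k) = 9 * 81^((k-1)/2) is 9 modulo 20. *)
Lemma pow9_mod20 k : odd k -> exists c, (3 ^ (2 * k) = 20 * c + 9)%N.
Proof.
move=> odd_k; have -> : (2 * k = 2 + 4 * k./2)%N.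
  by rewrite -{1}(odd_double_half k) odd_k -muln2; lia.
rewrite expnD expnM (_ : 3 ^ 2 = 9)%N // (_ : 3 ^ 4 = 81)%N //.
have pow81_mod20 : (81 ^ k./2 %% 20 = 1)%N.
  by rewrite -modnXm (_ : 81 %% 20 = 1)%N // exp1n.
exists (9 * (81 ^ k./2 %/ 20))%N.
by rewrite {1}(divn_eq (81 ^ k./2) 20) pow81_mod20; lia.
Qed.

(* (90c + 41) * 2(180c + 80) = 81 N + 80 for N = (20c + 8)(20c + 10), so a
   common divisor of 90c + 41 and N divides 80; but 90c + 41 is odd and is
   1 modulo 5. *)
Lemma coprime_e c : coprime (90 * c + 41) ((20 * c + 8) * (20 * c + 10)).
Proof.
set e := (90 * c + 41)%N; set N := ((20 * c + 8) * (20 * c + 10))%N.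
have bezout : (e * (2 * (180 * c + 80)) = 81 * N + 80)%N by rewrite /e /N; ring.
have gcd_dvd80 : (gcdn e N %| 80)%N.
  rewrite -(dvdn_addr _ (dvdn_mull 81 (dvdn_gcdr e N))) -bezout.
  exact: dvdn_mulr (dvdn_gcdl e N).
have coprime_e80 : coprime e 80.
  rewrite -[80%N]/(2 ^ 4 * 5)%N coprimeMr; apply/andP; split.
    by apply: coprimeXr; rewrite coprimen2 /e oddD oddM.
  have -> : e = ((18 * c + 8) * 5 + 1)%N by rewrite /e; ring.
  by rewrite /coprime -gcdn_modl modnMDl.
rewrite /coprime -dvdn1; move: coprime_e80; rewrite /coprime => /eqP <-.
by rewrite dvdn_gcd dvdn_gcdl gcd_dvd80.
Qed.

(* The exponent bookkeeping of the theorem, with q = 3^(2k) = 20c + 9: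
   |F| = q^2 = 2M + 1, e = (9q + 1)/2 is prime to 2M, and
   2e d = q + 1 modulo 2M, where d = (q + 1)^2 / 20 = 5(2c + 1)^2. *)
Lemma exponent_relations k : odd k ->
  exists M e l : nat,
  [/\ (3 ^ (4 * k) = (M * 2).+1)%N, (0 < e)%N, coprime e (M * 2),
      (3 ^ (2 * (k + 1)) + 1 = e * 2)%N &
      (e * 2 * ((3 ^ (2 * k) + 1) ^ 2 %/ 20) = 3 ^ (2 * k) + 1 + M * 2 * l)%N].
Proof.
move=> /pow9_mod20[c q_eq].
have d_eq : ((3 ^ (2 * k) + 1) ^ 2 %/ 20 = 5 * (2 * c + 1) ^ 2)%N.
  by rewrite q_eq (_ : 20 * c + 9 + 1 = 10 * (2 * c + 1))%N ?expnMn ?mulnA ?mulKn //; lia.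
have card_eq : (3 ^ (4 * k) = 3 ^ (2 * k) * 3 ^ (2 * k))%N.
  by rewrite -expnD -mulnDl.
have next_eq : (3 ^ (2 * (k + 1)) = 9 * 3 ^ (2 * k))%N by rewrite mulnDr expnD mulnC.
exists ((10 * c + 4) * (20 * c + 10))%N, (90 * c + 41)%N, (9 * c + 5)%N.
rewrite card_eq next_eq d_eq q_eq; split => //.
- by rewrite -addn1; ring.
- by rewrite addn_gt0 orbT.
- by rewrite (_ : _ * 2 = (20 * c + 8) * (20 * c + 10))%N ?coprime_e //; ring.
- by ring.
- by ring.
Qed.

Unset Implicit Arguments.

Theorem lemma1 (k : nat) (F : finFieldType) (alpha r : F) (tau : nat) :
  odd k ->
  #|F| = (3 ^ (4 * k))%N ->
  (3 ^ (4 * k) - 1).-primitive_root alpha ->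
  (tau <= 3 ^ (4 * k) - 2)%N ->
  r ^+ (3 ^ 4) = r ->
  ~ (exists y : F, y ^+ (3 ^ 4) = y /\ y ^+ 2 = r) ->
  let n := (4 * k)%N in
  let d := ((3 ^ (2 * k) + 1) ^ 2 %/ 20)%N in
  let s := fun t : nat => gf3 (tr n (alpha ^+ t)) in
  let a := alpha ^+ tau in
  let Cd := \sum_(0 <= t < 3 ^ n - 1) omega ^+ s (t + tau)%N / omega ^+ s (d * t)%N in
  let Sd := \sum_(x : F) omtr n (a * x - x ^+ d) in
  let q1 := fun x : F =>
    a * x ^+ (3 ^ (2 * (k + 1)) + 1) - x ^+ (3 ^ (2 * k) + 1) in
  let q2 := fun x : F =>
    a * r * x ^+ (3 ^ (2 * (k + 1)) + 1) - r ^+ d * x ^+ (3 ^ (2 * k) + 1) in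
  Cd = -1 + Sd /\
  2%:R * Sd = \sum_(x : F) omtr n (q1 x) + \sum_(x : F) omtr n (q2 x).
Proof.
move=> odd_k cardF3 prim _ fixed_r r_nonsq81 n d s a Cd Sd q1 q2.
have [M [e [l [cardM e_gt0 coprime_eN he hed]]]] := exponent_relations odd_k.
rewrite -/d in hed.
have char3 : 3 \in [pchar F] by apply: (card_finPcharP cardF3).
have cardF : #|F| = (M * 2).+1 by rewrite cardF3.
have N_eq : (3 ^ n - 1 = M * 2)%N by rewrite cardM subn1.
rewrite N_eq in prim.
have frobF (x : F) : x ^+ (3 ^ n) = x by rewrite -cardF3 expf_card.
have n_gt0 : (0 < n)%N by rewrite muln_gt0; apply: contraTT odd_k; case: (k).
pose G x := omtr n (a * x - x ^+ d).
have d_gt0 : (0 < d)%N by rewrite lt0n; apply/eqP => d0; move: hed; rewrite d0 muln0; lia.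
have Cd_term (t : nat) : omega ^+ s (t + tau)%N / omega ^+ s (d * t)%N = G (alpha ^+ t).
  by rewrite /G omtrB // -exprM mulnC /a -exprD addnC.
split.
  (* First identity: the powers of alpha miss only G(0) = 1. *)
  have -> : Cd = \sum_(t < M * 2) G (alpha ^+ t).
    by rewrite /Cd big_mkord N_eq; apply: eq_bigr => t _; rewrite Cd_term.
  rewrite sum_powers_alpha // /G mulr0 expr0n eqn0Ngt d_gt0 subrr omtr0 //.
  by rewrite addrC.
(* Second identity: split the sum along squares and r-times-squares, then
   substitute y = z^e. *)
have r_nonsq : ~ exists y, r = y ^+ 2.
  apply: (nonsquare_odd_extension (q := 3 ^ 4) (k := k)) => // x.
  by rewrite -expnM; apply: frobF.
have pow_e_inj := expr_coprime_inj cardF e_gt0 coprime_eN.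
have q_gt0 : (0 < 3 ^ (2 * k) + 1)%N by rewrite addn_gt0 orbT.
rewrite mulr_natl -(sum_square_twist cardF prim r_nonsq G).
congr (_ + _); rewrite (reindex_inj pow_e_inj); apply: eq_bigr => z _.
  by rewrite /G /q1 -!exprM hed (expr_mod_order cardF _ _ q_gt0) -he.
by rewrite /G /q2 exprMn -!exprM hed (expr_mod_order cardF _ _ q_gt0) -he mulrA.
Qed.
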